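(* Let $m\in\mathbb{N}$ with $m\ge 2$. For all $l\in\mathbb{N}_0$, $t>0$, the function $c^t_{m,l}$ on $\mathbb{RP}^m\times\mathbb{RP}^m$ satisfies $|c^t_{m,l}| \le e^{-l(l+m-1)\frac t2}\,2^7(l+m-2)^{m+1}$, and $c^t_{m,0}=c^t_{m,1}=0$. For all $t>0$ and $[x],[y]\in\mathbb{RP}^m$, $$\Big(\sum_{l=0}^\infty c^t_{m,l}([x],[y])\Big)^2 = \sum_{n=0}^\infty d^t_{m,n}([x],[y]),\qquad \Big(\sum_{l=0}^\infty c^t_{m,l}([x],[y])\Big)^3 = \sum_{k=0}^\infty h^t_{m,k}([x],[y]).$$ For all $n,k\in\mathbb{N}_0$ and $t>0$, $$|d^t_{m,n}| \le e^{-(\frac{n^2}{2}+n(m-1))\frac t2}\,2^{14}(n+m-2)^{2m+3},\qquad |h^t_{m,k}| \le e^{-(\frac{k^2}{3}+k(m-1))\frac t2}\,2^{21}(k+m-2)^{3m+5}$$ on $\mathbb{RP}^m\times\mathbb{RP}^m$. Moreover $d^t_{m,n}=0$ for $n\in\{0,1,2,3\}$ and $h^t_{m,k}=0$ for $k\in\{0,1,2,3,4,5\}$, for all $t>0$.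
   Context: $\mathbb{RP}^m = \{[x]: x\in\mathbb{S}^m\}$, $[x]=\{x,-x\}$, $\mathbb{S}^m\subset\mathbb{R}^{m+1}$ the unit sphere. $C_l^{(m-1)/2}$ is the Gegenbauer polynomial of degree $l$ and parameter $(m-1)/2$. For $l\in\mathbb{N}_0$ and $t>0$, define $c^t_{m,l}([x],[y]) := 0$ if $l$ is odd or $l=0$, and for even $l>0$, $c^t_{m,l}([x],[y]) := e^{-l(l+m-1)\frac t2}\frac{2l+m-1}{m-1}C_l^{(m-1)/2}(\langle x,y\rangle)$ (unit representatives $x,y$). Further, for $n,k\in\mathbb{N}_0$, $d^t_{m,n} := \sum_{l=0}^n c^t_{m,l}c^t_{m,n-l}$ and $h^t_{m,k} := \sum_{n=0}^k d^t_{m,n}c^t_{m,k-n}$ (pointwise in $([x],[y])$). *)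

From Stdlib Require Import Reals Lra Lia.
From Coquelicot Require Import Coquelicot.
Open Scope R_scope.

(* Points of S^m ⊂ R^(m+1): coordinates x 0, ..., x m (other coordinates ignored). *)
Definition inner (m : nat) (x y : nat -> R) : R := sum_f_R0 (fun i => x i * y i) m.
Definition on_sphere (m : nat) (x : nat -> R) : Prop := inner m x x = 1.

Fixpoint gegen_pair (lam x : R) (n : nat) : R * R :=
  match n with
  | O => (1, 2 * lam * x)
  | S n' =>
      let '(a, b) := gegen_pair lam x n' in
      let k := INR (n' + 2) in
      (b, (2 * x * (k + lam - 1) * b - (k + 2 * lam - 2) * a) / k)
  end.
Definition gegenbauer (n : nat) (lam : R) (x : R) : R := fst (gegen_pair lam x n).

(* c^t_{m,l}([x],[y]) with unit representatives x y *)
Definition cc (m l : nat) (t : R) (x y : nat -> R) : R :=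
  if andb (Nat.even l) (Nat.ltb 0 l) then
    exp (- (INR l * (INR l + INR m - 1)) * t / 2)
    * ((2 * INR l + INR m - 1) / (INR m - 1))
    * gegenbauer l ((INR m - 1) / 2) (inner m x y)
  else 0.

Definition dd (m n : nat) (t : R) (x y : nat -> R) : R :=
  sum_f_R0 (fun l => cc m l t x y * cc m (n - l) t x y) n.

Definition hh (m k : nat) (t : R) (x y : nat -> R) : R :=
  sum_f_R0 (fun n => dd m n t x y * cc m (k - n) t x y) k.

(* With a_j = (λ)_j / j! >= 0, the Gegenbauer polynomials have the Chebyshev
   expansion C_n^λ(x) = Σ_j a_j a_(n-j) T_|n-2j|(x), as one checks against their
   three-term recurrence.  As |T_k| <= 1 on [-1, 1], this gives
   |C_n^λ| <= C_n^λ(1) = (2λ)_n / n!, which for 2λ = m - 1 is at most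
   (n+1)^(m-2); the bound on c follows.  The functions d and h are Cauchy
   products, and j^2/r + (n-j)^2 >= n^2/(r+1) makes the Gaussian factors of the
   bounds on the two factors multiply to at most the Gaussian factor for the
   product; since c vanishes below 2, the polynomial factors of the at most
   n+1 nonzero terms are controlled by powers of n+m-4.  Finally the bound on c
   decays geometrically, so c is absolutely summable and the identities for the
   sums are Mertens' theorem on Cauchy products. *)

From Stdlib Require Import Reals Arith Lra Lia Psatz.
From Coquelicot Require Import Coquelicot.
Open Scope R_scope.

Fixpoint cheb (x : R) (k : nat) : R :=
  match k with
  | O => 1
  | S k' => match k' with O => x | S k'' => 2 * x * cheb x k' - cheb x k'' end
  end.

Lemma cheb_SS x k : cheb x (S (S k)) = 2 * x * cheb x (S k) - cheb x k.
Proof. reflexivity. Qed.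

Lemma cheb_pell x k :
  cheb x (S k) ^ 2 - 2 * x * cheb x (S k) * cheb x k + cheb x k ^ 2 = 1 - x ^ 2.
Proof.
  induction k as [|k IH]; [simpl; ring|].
  rewrite cheb_SS, <- IH. ring.
Qed.

Lemma cheb_pm1 x k : x * x = 1 -> cheb x k = x ^ k.
Proof.
  intros Hx.
  enough (H : cheb x k = x ^ k /\ cheb x (S k) = x ^ S k) by apply H.
  induction k as [|k [IHk IHSk]]; [simpl; split; ring|].
  split; [exact IHSk|].
  rewrite cheb_SS, IHk, IHSk. simpl.
  replace (2 * x * (x * x ^ k) - x ^ k) with ((2 * (x * x) - 1) * x ^ k) by ring.
  replace (x * (x * x ^ k)) with (x * x * x ^ k) by ring.
  rewrite Hx. ring.
Qed.

Lemma cheb_1 k : cheb 1 k = 1.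
Proof. rewrite cheb_pm1 by ring. apply pow1. Qed.

Lemma cheb_abs_le_1 x k : -1 <= x <= 1 -> Rabs (cheb x k) <= 1.
Proof.
  intros Hx. destruct (Rlt_or_le (x * x) 1) as [Hlt|Hge].
  - destruct k as [|k]; [simpl; rewrite Rabs_R1; lra|].
    pose proof (cheb_pell x k) as Hpell.
    pose proof (pow2_ge_0 (cheb x k - x * cheb x (S k))).
    (* [cheb_pell] reads (T_k - x T_(k+1))^2 + (1 - x^2) T_(k+1)^2 = 1 - x^2. *)
    assert (cheb x (S k) * cheb x (S k) <= 1) by nra.
    apply Rabs_le. nra.
  - assert (Hx2 : x * x = 1) by nra.
    assert (Habs : Rabs x = 1).
    { assert (Rabs x * Rabs x = 1) by (rewrite <- Rabs_mult, Hx2; apply Rabs_R1).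
      pose proof (Rabs_pos x). nra. }
    rewrite cheb_pm1, <- RPow_abs, Habs, pow1 by exact Hx2. lra.
Qed.

Definition nat_dist (a b : nat) : nat := (a - b) + (b - a).

Lemma cheb_nat_dist_S x n i :
  2 * x * cheb x (nat_dist (S n) i) = cheb x (nat_dist (S (S n)) i) + cheb x (nat_dist n i).
Proof.
  unfold nat_dist.
  destruct (le_lt_dec i n) as [Hi|Hi]; [|destruct (Nat.eq_dec i (S n)) as [->|Hi']].
  - replace (S n - i + (i - S n))%nat with (S (n - i)) by lia.
    replace (S (S n) - i + (i - S (S n)))%nat with (S (S (n - i))) by lia.
    replace (n - i + (i - n))%nat with (n - i)%nat by lia.
    rewrite cheb_SS. ring.
  - replace (S n - S n + (S n - S n))%nat with 0%nat by lia.
    replace (S (S n) - S n + (S n - S (S n)))%nat with 1%nat by lia.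
    replace (n - S n + (S n - n))%nat with 1%nat by lia.
    simpl. ring.
  - replace (S n - i + (i - S n))%nat with (S (i - S (S n))) by lia.
    replace (S (S n) - i + (i - S (S n)))%nat with (i - S (S n))%nat by lia.
    replace (n - i + (i - n))%nat with (S (S (i - S (S n)))) by lia.
    rewrite cheb_SS. ring.
Qed.

Definition lag (u : nat -> R) (j : nat) : R :=
  match j with O => 0 | S i => u i end.

Definition cheb_conv (u v : nat -> R) (x : R) (N : nat) : R :=
  sum_f_R0 (fun j => u j * v (N - j)%nat * cheb x (nat_dist N (2 * j))) N.

Lemma cheb_conv_lag_lag u v x n :
  cheb_conv (lag u) (lag v) x (S (S n)) = cheb_conv u v x n.
Proof.
  unfold cheb_conv. rewrite decomp_sum by lia. simpl pred. rewrite tech5.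
  replace (S (S n) - S (S n))%nat with 0%nat by lia. simpl (lag u 0). simpl (lag v 0).
  rewrite !Rmult_0_l, Rmult_0_r, Rmult_0_l, Rplus_0_l, Rplus_0_r.
  apply sum_eq. intros j Hj.
  replace (S (S n) - S j)%nat with (S (n - j)) by lia.
  replace (nat_dist (S (S n)) (2 * S j)) with (nat_dist n (2 * j)) by (unfold nat_dist; lia).
  reflexivity.
Qed.

Lemma cheb_conv_2x u v x n :
  2 * x * cheb_conv u v x (S n) =
  cheb_conv u (lag v) x (S (S n)) + cheb_conv (lag u) v x (S (S n)).
Proof.
  unfold cheb_conv.
  rewrite (tech5 (fun j => u j * lag v (S (S n) - j)%nat * _)).
  rewrite (decomp_sum (fun j => lag u j * v (S (S n) - j)%nat * _)) by lia.
  cbv beta. simpl pred. rewrite Nat.sub_diag. simpl (lag v 0). simpl (lag u 0).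
  rewrite Rmult_0_r, !Rmult_0_l, Rplus_0_r, Rplus_0_l, <- plus_sum, scal_sum.
  apply sum_eq. intros j Hj.
  replace (S (S n) - j)%nat with (S (S n - j)) by lia.
  replace (S (S n) - S j)%nat with (S n - j)%nat by lia.
  replace (nat_dist (S (S n)) (2 * S j)) with (nat_dist n (2 * j)) by (unfold nat_dist; lia).
  cbn [lag].
  transitivity (u j * v (S n - j)%nat * (2 * x * cheb x (nat_dist (S n) (2 * j)))); [ring|].
  rewrite cheb_nat_dist_S. ring.
Qed.

Fixpoint gegen_coef (lam : R) (j : nat) : R :=
  match j with O => 1 | S i => gegen_coef lam i * (lam + INR i) / INR (S i) end.

Lemma gegen_coef_ge0 lam j : 0 <= lam -> 0 <= gegen_coef lam j.
Proof.
  intros Hlam. induction j as [|j IH]; cbn [gegen_coef]; [lra|].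
  apply Rdiv_le_0_compat; [|apply lt_0_INR; lia].
  apply Rmult_le_pos; [exact IH|pose proof (pos_INR j); lra].
Qed.

Lemma gegen_coef_rec lam j :
  INR j * gegen_coef lam j = (lam + INR j - 1) * lag (gegen_coef lam) j.
Proof.
  destruct j as [|j]; [simpl; ring|].
  cbn [gegen_coef lag]. rewrite S_INR. field. pose proof (pos_INR j). lra.
Qed.

Lemma gegen_coef_mul_rec lam p q :
  let a := gegen_coef lam in
  (INR p + INR q) * (a p * a q) =
  (INR p + INR q + lam - 1) * (a p * lag a q + lag a p * a q)
  - (INR p + INR q + 2 * lam - 2) * (lag a p * lag a q).
Proof.
  intros a. pose proof (gegen_coef_rec lam p) as Hp. pose proof (gegen_coef_rec lam q) as Hq.
  fold a in Hp, Hq.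
  enough (E : (INR q * a q - (lam + INR q - 1) * lag a q) * (a p - lag a p)
              + (INR p * a p - (lam + INR p - 1) * lag a p) * (a q - lag a q) = 0)
    by (apply Rminus_diag_uniq; rewrite <- E; ring).
  rewrite Hp, Hq. ring.
Qed.

Lemma cheb_conv_gegen_rec lam x n :
  let a := gegen_coef lam in
  INR (S (S n)) * cheb_conv a a x (S (S n)) =
  2 * x * (INR (S (S n)) + lam - 1) * cheb_conv a a x (S n)
  - (INR (S (S n)) + 2 * lam - 2) * cheb_conv a a x n.
Proof.
  intros a.
  rewrite <- (cheb_conv_lag_lag a a x n).
  replace (2 * x * (INR (S (S n)) + lam - 1) * cheb_conv a a x (S n))
    with ((INR (S (S n)) + lam - 1) * (2 * x * cheb_conv a a x (S n))) by ring.
  rewrite cheb_conv_2x. unfold cheb_conv.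
  rewrite <- plus_sum, !scal_sum, <- minus_sum.
  apply sum_eq. intros j Hj.
  pose proof (gegen_coef_mul_rec lam j (S (S n) - j)) as E. cbv zeta in E. fold a in E.
  replace (INR j + INR (S (S n) - j)) with (INR (S (S n))) in E
    by (rewrite <- plus_INR; f_equal; lia).
  set (F := cheb x _).
  transitivity (INR (S (S n)) * (a j * a (S (S n) - j)%nat) * F); [ring|].
  rewrite E. ring.
Qed.

Lemma gegen_pair_cheb_conv lam x n :
  gegen_pair lam x n =
  (cheb_conv (gegen_coef lam) (gegen_coef lam) x n,
   cheb_conv (gegen_coef lam) (gegen_coef lam) x (S n)).
Proof.
  induction n as [|n IH].
  - unfold cheb_conv, nat_dist. simpl. f_equal; field.
  - cbn [gegen_pair]. rewrite IH. f_equal.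
    replace (INR (n + 2)) with (INR (S (S n))) by (f_equal; lia).
    assert (0 < INR (S (S n))) by (apply lt_0_INR; lia).
    apply (Rmult_eq_reg_l (INR (S (S n)))); [|lra].
    rewrite cheb_conv_gegen_rec. field. lra.
Qed.

Lemma gegenbauer_abs_le_at_1 n lam x :
  0 <= lam -> -1 <= x <= 1 -> Rabs (gegenbauer n lam x) <= gegenbauer n lam 1.
Proof.
  intros Hlam Hx. unfold gegenbauer. rewrite !gegen_pair_cheb_conv. simpl fst.
  unfold cheb_conv. eapply Rle_trans; [apply sum_f_R0_triangle|].
  apply sum_Rle. intros j _.
  assert (Hc : 0 <= gegen_coef lam j * gegen_coef lam (n - j))
    by (apply Rmult_le_pos; apply gegen_coef_ge0; exact Hlam).
  pose proof (cheb_abs_le_1 x (nat_dist n (2 * j)) Hx).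
  rewrite cheb_1, Rmult_1_r, Rabs_mult, (Rabs_pos_eq _ Hc). nra.
Qed.

Lemma gegenbauer_at_1 n lam : gegenbauer n lam 1 = gegen_coef (2 * lam) n.
Proof.
  unfold gegenbauer.
  enough (H : gegen_pair lam 1 n = (gegen_coef (2 * lam) n, gegen_coef (2 * lam) (S n)))
    by (rewrite H; reflexivity).
  induction n as [|n IH].
  - simpl. f_equal. field.
  - cbn [gegen_pair]. rewrite IH. f_equal.
    replace (INR (n + 2)) with (INR n + 2) by (rewrite plus_INR; simpl; ring).
    cbn [gegen_coef]. rewrite !S_INR. pose proof (pos_INR n). field. lra.
Qed.

Lemma gegen_coef_le_pow m n :
  (2 <= m)%nat -> gegen_coef (INR m - 1) n <= (INR n + 1) ^ (m - 2).
Proof.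
  intros Hm. assert (HmR : 2 <= INR m) by (apply (le_INR 2); exact Hm).
  induction n as [|n IH]; [simpl; rewrite Rplus_0_l, pow1; lra|].
  pose proof (pos_INR n).
  set (q := 1 / (INR n + 1)). assert (0 <= q) by (unfold q; apply Rdiv_le_0_compat; lra).
  cbn [gegen_coef]. rewrite S_INR.
  replace (gegen_coef (INR m - 1) n * (INR m - 1 + INR n) / (INR n + 1))
    with (gegen_coef (INR m - 1) n * (1 + INR (m - 2) * q))
    by (unfold q; rewrite minus_INR by exact Hm; simpl; field; lra).
  replace (INR n + 1 + 1) with ((INR n + 1) * (1 + q)) by (unfold q; field; lra).
  rewrite Rpow_mult_distr.
  apply Rmult_le_compat; [apply gegen_coef_ge0; lra| |exact IH|apply Rle_pow_lin; lra].
  pose proof (pos_INR (m - 2)). nra.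
Qed.

Lemma inner_abs_le m x y : 2 * Rabs (inner m x y) <= inner m x x + inner m y y.
Proof.
  assert (Hterm : forall a b, 2 * Rabs (a * b) <= a * a + b * b).
  { intros a b. pose proof (pow2_ge_0 (a - b)). pose proof (pow2_ge_0 (a + b)).
    assert (Rabs (a * b) <= (a * a + b * b) / 2) by (apply Rabs_le; split; nra).
    lra. }
  unfold inner. induction m as [|m IH]; simpl; [apply Hterm|].
  pose proof (Rabs_triang (sum_f_R0 (fun i => x i * y i) m) (x (S m) * y (S m))).
  pose proof (Hterm (x (S m)) (y (S m))). lra.
Qed.

Lemma inner_sphere_bound m x y :
  on_sphere m x -> on_sphere m y -> -1 <= inner m x y <= 1.
Proof.
  intros Hx Hy. pose proof (inner_abs_le m x y) as H.
  unfold on_sphere in Hx, Hy. rewrite Hx, Hy in H.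
  apply Rabs_le_between. lra.
Qed.

Lemma cc_prefactor_le l m :
  (2 <= l)%nat -> (2 <= m)%nat ->
  (2 * INR l + INR m - 1) / (INR m - 1) * (INR l + 1) ^ (m - 2)
  <= 2 ^ 7 * (INR l + INR m - 2) ^ (m + 1).
Proof.
  intros Hl Hm. assert (HmR : 2 <= INR m) by (apply (le_INR 2); exact Hm).
  assert (HlR : 2 <= INR l) by (apply (le_INR 2); exact Hl).
  set (N := INR l + INR m - 2).
  assert (Hpow : (INR l + 1) ^ (m - 2) <= N ^ (m - 2)).
  { destruct (Nat.eq_dec m 2) as [->|Hm3]; [simpl; lra|].
    assert (3 <= INR m) by (replace 3 with (INR 3) by (simpl; ring); apply le_INR; lia).
    apply pow_incr. unfold N. lra. }
  assert (Hratio : (2 * INR l + INR m - 1) / (INR m - 1) <= 2 * N + 1).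
  { apply Rmult_le_reg_r with (INR m - 1); [lra|].
    unfold Rdiv. rewrite Rmult_assoc, Rinv_l by lra. unfold N. nra. }
  assert (HN3 : 2 * N + 1 <= 2 ^ 7 * N ^ 3).
  { assert (HN : 2 <= N) by (unfold N; lra). clearbody N.
    assert (4 <= N * N) by nra. simpl. nra. }
  replace (m + 1)%nat with ((m - 2) + 3)%nat by lia. rewrite pow_add.
  apply Rle_trans with ((2 * N + 1) * N ^ (m - 2)).
  - apply Rmult_le_compat; try assumption.
    + apply Rdiv_le_0_compat; lra.
    + apply pow_le. lra.
  - replace (2 ^ 7 * (N ^ (m - 2) * N ^ 3)) with (2 ^ 7 * N ^ 3 * N ^ (m - 2)) by ring.
    apply Rmult_le_compat_r; [apply pow_le; unfold N; lra|exact HN3].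
Qed.

Lemma cc_vanish m l t x y : (l < 2)%nat -> cc m l t x y = 0.
Proof. intros Hl. destruct l as [|[|l]]; [reflexivity|reflexivity|lia]. Qed.

Lemma cc_abs_le m l t x y :
  (2 <= m)%nat -> -1 <= inner m x y <= 1 ->
  Rabs (cc m l t x y)
  <= exp (- (INR l * (INR l + INR m - 1)) * t / 2) * 2 ^ 7 * (INR l + INR m - 2) ^ (m + 1).
Proof.
  intros Hm Hz. assert (HmR : 2 <= INR m) by (apply (le_INR 2); exact Hm).
  pose proof (pos_INR l).
  pose proof (exp_pos (- (INR l * (INR l + INR m - 1)) * t / 2)).
  assert (0 <= (INR l + INR m - 2) ^ (m + 1)) by (apply pow_le; lra).
  unfold cc. destruct (Nat.even l && Nat.ltb 0 l)%bool eqn:Hl.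
  2:{ rewrite Rabs_R0. apply Rmult_le_pos; [apply Rmult_le_pos|]; lra. }
  assert (Hl2 : (2 <= l)%nat) by (destruct l as [|[|l]]; try discriminate; lia).
  assert (Hpre : 0 <= (2 * INR l + INR m - 1) / (INR m - 1)) by (apply Rdiv_le_0_compat; lra).
  rewrite !Rabs_mult, (Rabs_pos_eq (exp _)), (Rabs_pos_eq _ Hpre) by lra.
  rewrite !Rmult_assoc. apply Rmult_le_compat_l; [lra|].
  eapply Rle_trans; [|apply cc_prefactor_le; assumption].
  apply Rmult_le_compat_l; [exact Hpre|].
  eapply Rle_trans; [apply gegenbauer_abs_le_at_1; [lra|exact Hz]|].
  rewrite gegenbauer_at_1. replace (2 * ((INR m - 1) / 2)) with (INR m - 1) by field.
  apply gegen_coef_le_pow. exact Hm.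
Qed.

Definition cauchy_prod (u v : nat -> R) (n : nat) : R :=
  sum_f_R0 (fun j => u j * v (n - j)%nat) n.

Lemma cauchy_prod_vanish a b u v n :
  (forall j, (j < a)%nat -> u j = 0) -> (forall j, (j < b)%nat -> v j = 0) ->
  (n < a + b)%nat -> cauchy_prod u v n = 0.
Proof.
  intros Hu Hv Hn. unfold cauchy_prod.
  rewrite (sum_eq _ (fun _ => 0)), sum_cte; [ring|].
  intros j Hj. destruct (lt_dec j a) as [Hja|Hja].
  - rewrite Hu by exact Hja. ring.
  - rewrite Hv by lia. ring.
Qed.

Lemma ex_series_abs_cauchy_prod u v :
  ex_series (fun n => Rabs (u n)) -> ex_series (fun n => Rabs (v n)) ->
  ex_series (fun n => Rabs (cauchy_prod u v n)).
Proof.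
  intros Hu Hv.
  assert (Habs : forall w, ex_series (fun n => Rabs (w n)) ->
                   ex_series (fun n => Rabs (Rabs (w n)))).
  { intros w Hw. apply (ex_series_ext (fun n => Rabs (w n))); [|exact Hw].
    intros n. symmetry. apply Rabs_Rabsolu. }
  apply (@ex_series_le R_AbsRing R_CompleteNormedModule _
           (cauchy_prod (fun n => Rabs (u n)) (fun n => Rabs (v n)))).
  - intros n. change (norm (Rabs (cauchy_prod u v n)))
      with (Rabs (Rabs (cauchy_prod u v n))).
    rewrite Rabs_Rabsolu. unfold cauchy_prod.
    eapply Rle_trans; [apply sum_f_R0_triangle|].
    apply sum_Rle. intros j _. rewrite Rabs_mult. apply Rle_refl.
  - eexists. apply is_series_mult; try apply Series_correct; auto.
Qed.

Lemma is_series_cauchy_prod_pow u S :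
  is_series u S -> ex_series (fun n => Rabs (u n)) ->
  is_series (cauchy_prod u u) (S ^ 2) /\
  is_series (cauchy_prod (cauchy_prod u u) u) (S ^ 3).
Proof.
  intros Hs Ha.
  assert (H2 : is_series (cauchy_prod u u) (S * S))
    by exact (is_series_mult u u S S Hs Hs Ha Ha).
  split; [replace (S ^ 2) with (S * S) by ring; exact H2|].
  replace (S ^ 3) with (S * S * S) by ring.
  apply is_series_mult; auto. apply ex_series_abs_cauchy_prod; assumption.
Qed.

Lemma exp_le a b : a <= b -> exp a <= exp b.
Proof.
  intros [Hlt|Heq]; [left; apply exp_increasing; exact Hlt|right; f_equal; exact Heq].
Qed.

Lemma exp_pow a k : exp a ^ k = exp (INR k * a).
Proof.
  induction k as [|k IH]; [simpl; rewrite Rmult_0_l, exp_0; reflexivity|].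
  simpl pow. rewrite IH, S_INR, <- exp_plus. f_equal. ring.
Qed.

Lemma pow_le_exp y p eps :
  0 <= y -> 0 < eps -> y ^ p <= (INR p / eps) ^ p * exp (eps * y).
Proof.
  intros Hy Heps. destruct p as [|p].
  { simpl. pose proof (exp_ineq1_le (eps * y)). nra. }
  assert (HpR : 1 <= INR (S p)) by (apply (le_INR 1); lia).
  replace y with (INR (S p) / eps * (eps * y / INR (S p))) at 1 by (field; lra).
  replace (exp (eps * y)) with (exp (eps * y / INR (S p)) ^ S p)
    by (rewrite exp_pow; f_equal; field; lra).
  rewrite Rpow_mult_distr. apply Rmult_le_compat_l.
  { apply pow_le, Rdiv_le_0_compat; lra. }
  apply pow_incr. split.
  - apply Rdiv_le_0_compat; nra.
  - pose proof (exp_ineq1_le (eps * y / INR (S p))). lra.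
Qed.

Definition heat_weight (r : R) (m : nat) (t a : R) : R :=
  exp (- (a ^ 2 / r + a * (INR m - 1)) * t / 2).

Definition heat_bounded (r : R) (m p : nat) (t K : R) (u : nat -> R) : Prop :=
  forall n, Rabs (u n) <= heat_weight r m t (INR n) * K * (INR n + INR m - 2) ^ p.

Lemma heat_weight_mul r m t a b :
  0 < r -> 0 <= t ->
  heat_weight r m t a * heat_weight 1 m t b <= heat_weight (r + 1) m t (a + b).
Proof.
  intros Hr Ht. unfold heat_weight. rewrite <- exp_plus. apply exp_le.
  assert (Hsq : a ^ 2 / r + b ^ 2 / 1 - (a + b) ^ 2 / (r + 1) = (a - r * b) ^ 2 / (r * (r + 1)))
    by (field; lra).
  assert (0 <= (a - r * b) ^ 2 / (r * (r + 1)))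
    by (apply Rdiv_le_0_compat; [apply pow2_ge_0|nra]).
  nra.
Qed.

Lemma succ_mul_pow_le a N s :
  0 <= a <= N -> 2 <= N -> (1 <= s)%nat -> (a + 1) * (N - 2) ^ s <= N ^ S s.
Proof.
  intros Ha HN Hs. replace s with (S (s - 1)) by lia.
  change ((N - 2) ^ S (s - 1)) with ((N - 2) * (N - 2) ^ (s - 1)).
  change (N ^ S (S (s - 1))) with (N * (N * N ^ (s - 1))).
  assert ((N - 2) ^ (s - 1) <= N ^ (s - 1)) by (apply pow_incr; lra).
  assert (0 <= (N - 2) ^ (s - 1)) by (apply pow_le; lra).
  replace ((a + 1) * ((N - 2) * (N - 2) ^ (s - 1)))
    with ((a + 1) * (N - 2) * (N - 2) ^ (s - 1)) by ring.
  rewrite <- Rmult_assoc.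
  apply Rmult_le_compat; [nra|assumption|nra|assumption].
Qed.

Section HeatBoundedProduct.

Variables (r t K1 K2 : R) (m p q : nat) (u v : nat -> R).
Hypotheses (Hr : 0 < r) (Ht : 0 <= t) (Hm : (2 <= m)%nat) (HK1 : 0 <= K1) (HK2 : 0 <= K2).
Hypotheses (Hu : heat_bounded r m p t K1 u) (Hv : heat_bounded 1 m q t K2 v).

Lemma heat_bounded_term_le n j :
  (2 <= j)%nat -> (j + 2 <= n)%nat ->
  Rabs (u j * v (n - j)%nat)
  <= heat_weight (r + 1) m t (INR n) * (K1 * K2) * (INR n + INR m - 4) ^ (p + q).
Proof.
  intros Hj Hnj. assert (HmR : 2 <= INR m) by (apply (le_INR 2); exact Hm).
  assert (Hsplit : INR n = INR j + INR (n - j)) by (rewrite <- plus_INR; f_equal; lia).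
  assert (HjR : 2 <= INR j) by (apply (le_INR 2); exact Hj).
  assert (HnjR : 2 <= INR (n - j)) by (apply (le_INR 2); lia).
  assert (Hpow : (INR j + INR m - 2) ^ p * (INR (n - j) + INR m - 2) ^ q
                 <= (INR n + INR m - 4) ^ (p + q)).
  { rewrite pow_add. apply Rmult_le_compat; try (apply pow_le; lra); apply pow_incr; lra. }
  rewrite Rabs_mult.
  eapply Rle_trans; [apply Rmult_le_compat; [apply Rabs_pos|apply Rabs_pos|apply Hu|apply Hv]|].
  pose proof (heat_weight_mul r m t (INR j) (INR (n - j)) Hr Ht) as Hw.
  rewrite <- Hsplit in Hw.
  assert (0 <= heat_weight r m t (INR j)) by (left; apply exp_pos).
  assert (0 <= heat_weight 1 m t (INR (n - j))) by (left; apply exp_pos).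
  replace (heat_weight r m t (INR j) * K1 * (INR j + INR m - 2) ^ p
           * (heat_weight 1 m t (INR (n - j)) * K2 * (INR (n - j) + INR m - 2) ^ q))
    with (heat_weight r m t (INR j) * heat_weight 1 m t (INR (n - j)) * (K1 * K2)
          * ((INR j + INR m - 2) ^ p * (INR (n - j) + INR m - 2) ^ q)) by ring.
  apply Rmult_le_compat; [| |apply Rmult_le_compat_r; [nra|exact Hw]|exact Hpow].
  - apply Rmult_le_pos; apply Rmult_le_pos; assumption.
  - apply Rmult_le_pos; apply pow_le; lra.
Qed.

Lemma heat_bounded_cauchy_prod :
  (1 <= p + q)%nat ->
  (forall j, (j < 2)%nat -> u j = 0) -> (forall j, (j < 2)%nat -> v j = 0) ->
  heat_bounded (r + 1) m (S (p + q)) t (K1 * K2) (cauchy_prod u v).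
Proof.
  intros Hpq Hu0 Hv0 n. assert (HmR : 2 <= INR m) by (apply (le_INR 2); exact Hm).
  pose proof (pos_INR n).
  assert (HW : 0 < heat_weight (r + 1) m t (INR n)) by apply exp_pos.
  assert (HK : 0 <= K1 * K2) by (apply Rmult_le_pos; assumption).
  destruct (lt_dec n 4) as [Hn|Hn].
  { rewrite (cauchy_prod_vanish 2 2 u v n Hu0 Hv0 Hn), Rabs_R0.
    apply Rmult_le_pos; [apply Rmult_le_pos; lra|apply pow_le; lra]. }
  assert (HnR : 4 <= INR n) by (replace 4 with (INR 4) by (simpl; ring); apply le_INR; lia).
  set (N := INR n + INR m - 2).
  set (M := heat_weight (r + 1) m t (INR n) * (K1 * K2) * (N - 2) ^ (p + q)).
  assert (HM : 0 <= M)
    by (apply Rmult_le_pos; [apply Rmult_le_pos; lra|apply pow_le; unfold N; lra]).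
  apply Rle_trans with (M * INR (S n)).
  - unfold cauchy_prod. eapply Rle_trans; [apply sum_f_R0_triangle|].
    rewrite <- sum_cte. apply sum_Rle. intros j Hj.
    destruct (lt_dec j 2) as [Hj2|Hj2].
    { rewrite (Hu0 _ Hj2), Rmult_0_l, Rabs_R0. exact HM. }
    destruct (lt_dec (n - j) 2) as [Hnj|Hnj].
    { rewrite (Hv0 _ Hnj), Rmult_0_r, Rabs_R0. exact HM. }
    unfold M, N. replace (INR n + INR m - 2 - 2) with (INR n + INR m - 4) by ring.
    apply heat_bounded_term_le; lia.
  - unfold M. rewrite S_INR.
    replace (heat_weight (r + 1) m t (INR n) * (K1 * K2) * (N - 2) ^ (p + q) * (INR n + 1))
      with (heat_weight (r + 1) m t (INR n) * (K1 * K2) * ((INR n + 1) * (N - 2) ^ (p + q)))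
      by ring.
    apply Rmult_le_compat_l; [apply Rmult_le_pos; lra|].
    apply succ_mul_pow_le; [unfold N; lra|unfold N; lra|exact Hpq].
Qed.

End HeatBoundedProduct.

Lemma ex_series_abs_heat_bounded r m p t K u :
  0 < r -> 0 < t -> (2 <= m)%nat -> 0 <= K -> heat_bounded r m p t K u ->
  ex_series (fun n => Rabs (u n)).
Proof.
  intros Hr Ht Hm HK Hu. assert (HmR : 2 <= INR m) by (apply (le_INR 2); exact Hm).
  set (C := K * (INR p / (t / 4)) ^ p * exp (t / 4 * (INR m - 2))).
  apply (@ex_series_le R_AbsRing R_CompleteNormedModule _ (fun n => C * exp (- t / 4) ^ n)).
  - intros n. change (norm (Rabs (u n))) with (Rabs (Rabs (u n))). rewrite Rabs_Rabsolu.
    eapply Rle_trans; [apply Hu|]. pose proof (pos_INR n).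
    pose proof (pow_le_exp (INR n + INR m - 2) p (t / 4)) as Hpoly.
    assert (0 <= (INR p / (t / 4)) ^ p) by (apply pow_le, Rdiv_le_0_compat; [apply pos_INR|lra]).
    assert (0 <= INR n ^ 2 / r) by (apply Rdiv_le_0_compat; [apply pow2_ge_0|lra]).
    eapply Rle_trans.
    { apply Rmult_le_compat_l; [apply Rmult_le_pos; [left; apply exp_pos|exact HK]|].
      apply Hpoly; lra. }
    unfold C, heat_weight. rewrite exp_pow.
    replace (exp (- (INR n ^ 2 / r + INR n * (INR m - 1)) * t / 2) * K
             * ((INR p / (t / 4)) ^ p * exp (t / 4 * (INR n + INR m - 2))))
      with (K * (INR p / (t / 4)) ^ p
            * (exp (- (INR n ^ 2 / r + INR n * (INR m - 1)) * t / 2)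
               * exp (t / 4 * (INR n + INR m - 2)))) by ring.
    rewrite <- exp_plus, (Rmult_assoc (K * _)), <- exp_plus.
    apply Rmult_le_compat_l; [apply Rmult_le_pos; assumption|]. apply exp_le.
    assert (0 <= INR n * (INR m - 2) * t) by (repeat apply Rmult_le_pos; lra).
    assert (0 <= t * (INR n ^ 2 / r)) by (apply Rmult_le_pos; lra).
    nra.
  - apply (ex_series_scal (V := R_NormedModule) C). apply ex_series_geom.
    rewrite Rabs_pos_eq by (left; apply exp_pos).
    rewrite <- exp_0. apply exp_increasing. lra.
Qed.

Section HeatKernelTerms.

Variables (m : nat) (t : R) (x y : nat -> R).
Hypotheses (Hm : (2 <= m)%nat) (Hz : -1 <= inner m x y <= 1).

Let c l := cc m l t x y.

Lemma cc_heat_bounded : heat_bounded 1 m (m + 1) t (2 ^ 7) c.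
Proof.
  intros l. unfold heat_weight.
  replace (INR l ^ 2 / 1 + INR l * (INR m - 1)) with (INR l * (INR l + INR m - 1)) by field.
  apply cc_abs_le; assumption.
Qed.

Lemma dd_vanish n : (n < 4)%nat -> dd m n t x y = 0.
Proof.
  change (dd m n t x y) with (cauchy_prod c c n).
  apply (cauchy_prod_vanish 2 2); intros; apply cc_vanish; assumption.
Qed.

Lemma hh_vanish k : (k < 6)%nat -> hh m k t x y = 0.
Proof.
  change (hh m k t x y) with (cauchy_prod (fun n => dd m n t x y) c k).
  apply (cauchy_prod_vanish 4 2); intros; [apply dd_vanish|apply cc_vanish]; assumption.
Qed.

Hypothesis (Ht : 0 <= t).

Lemma dd_heat_bounded : heat_bounded 2 m (2 * m + 3) t (2 ^ 14) (fun n => dd m n t x y).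
Proof.
  pose proof (heat_bounded_cauchy_prod 1 t (2 ^ 7) (2 ^ 7) m (m + 1) (m + 1) c c
                ltac:(lra) Ht Hm ltac:(lra) ltac:(lra) cc_heat_bounded cc_heat_bounded
                ltac:(lia) (fun l => cc_vanish m l t x y) (fun l => cc_vanish m l t x y)) as H.
  replace (1 + 1) with 2 in H by ring.
  replace (S (m + 1 + (m + 1))) with (2 * m + 3)%nat in H by lia.
  replace (2 ^ 7 * 2 ^ 7) with (2 ^ 14) in H by ring.
  exact H.
Qed.

Lemma hh_heat_bounded : heat_bounded 3 m (3 * m + 5) t (2 ^ 21) (fun k => hh m k t x y).
Proof.
  pose proof (heat_bounded_cauchy_prod 2 t (2 ^ 14) (2 ^ 7) m (2 * m + 3) (m + 1)
                (fun n => dd m n t x y) c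
                ltac:(lra) Ht Hm ltac:(lra) ltac:(lra) dd_heat_bounded cc_heat_bounded
                ltac:(lia) (fun n Hn => dd_vanish n ltac:(lia)) (fun l => cc_vanish m l t x y))
    as H.
  replace (2 + 1) with 3 in H by ring.
  replace (S (2 * m + 3 + (m + 1))) with (3 * m + 5)%nat in H by lia.
  replace (2 ^ 14 * 2 ^ 7) with (2 ^ 21) in H by ring.
  exact H.
Qed.

End HeatKernelTerms.

Theorem lemma3p5 (m : nat) (Hm : (2 <= m)%nat) :
  (forall (l : nat) (t : R) (x y : nat -> R), 0 < t ->
     on_sphere m x -> on_sphere m y ->
     Rabs (cc m l t x y)
       <= exp (- (INR l * (INR l + INR m - 1)) * t / 2)
          * 2 ^ 7 * (INR l + INR m - 2) ^ (m + 1)) /\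
  (forall (t : R) (x y : nat -> R), 0 < t ->
     on_sphere m x -> on_sphere m y ->
     cc m 0 t x y = 0 /\ cc m 1 t x y = 0) /\
  (forall (t : R) (x y : nat -> R), 0 < t ->
     on_sphere m x -> on_sphere m y ->
     exists S : R,
       is_series (fun l => cc m l t x y) S /\
       is_series (fun n => dd m n t x y) (S ^ 2) /\
       is_series (fun k => hh m k t x y) (S ^ 3)) /\
  (forall (n : nat) (t : R) (x y : nat -> R), 0 < t ->
     on_sphere m x -> on_sphere m y ->
     Rabs (dd m n t x y)
       <= exp (- (INR n ^ 2 / 2 + INR n * (INR m - 1)) * t / 2)
          * 2 ^ 14 * (INR n + INR m - 2) ^ (2 * m + 3)) /\
  (forall (k : nat) (t : R) (x y : nat -> R), 0 < t ->
     on_sphere m x -> on_sphere m y ->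
     Rabs (hh m k t x y)
       <= exp (- (INR k ^ 2 / 3 + INR k * (INR m - 1)) * t / 2)
          * 2 ^ 21 * (INR k + INR m - 2) ^ (3 * m + 5)) /\
  (forall (n : nat) (t : R) (x y : nat -> R), 0 < t ->
     on_sphere m x -> on_sphere m y ->
     (n <= 3)%nat -> dd m n t x y = 0) /\
  (forall (k : nat) (t : R) (x y : nat -> R), 0 < t ->
     on_sphere m x -> on_sphere m y ->
     (k <= 5)%nat -> hh m k t x y = 0).
Proof.
  split; [intros l t x y _ Hx Hy; apply cc_abs_le; auto using inner_sphere_bound|].
  split; [intros; split; reflexivity|].
  split.
  { intros t x y Ht Hx Hy.
    pose proof (cc_heat_bounded m t x y Hm (inner_sphere_bound m x y Hx Hy)) as Hc.
    pose proof (ex_series_abs_heat_bounded 1 m (m + 1) t (2 ^ 7) _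
                  ltac:(lra) Ht Hm ltac:(lra) Hc) as Habs.
    pose proof (Series_correct _ (ex_series_Rabs _ Habs)) as Hs.
    exists (Series (fun l => cc m l t x y)).
    split; [exact Hs|]. exact (is_series_cauchy_prod_pow _ _ Hs Habs). }
  split; [intros n t x y Ht Hx Hy; apply dd_heat_bounded; auto using inner_sphere_bound; lra|].
  split; [intros k t x y Ht Hx Hy; apply hh_heat_bounded; auto using inner_sphere_bound; lra|].
  split; intros * _ _ _ Hle; [apply dd_vanish|apply hh_vanish]; lia.
Qed.
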